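(* Let $q>0$. If $L(q)$ contains a loop of odd length, then the weight $w_{q/n}$ is not unique for any integer $n\ge2$.
   Context: For $q>0$, $k\ge0$ and $\mathbf m=(m_0,\dots,m_k)\in\mathbb Z^{k+1}$ put $\mathbf m_j=(m_0,\dots,m_j)$; define $c(q,\mathbf m_0)=m_0$ and $c(q,\mathbf m_j)=m_j+\frac{1}{q\,c(q,\mathbf m_{j-1})}$ for $1\le j\le k$. $\mathbf m$ is a path for $q$ of length $k$ if $c(q,\mathbf m_j)\ne0$ for $0\le j\le k-1$. The weight of a path is $w_q(\mathbf m)=q^{k/2}\prod_{j=0}^{k-1}|c(q,\mathbf m_j)|$ (and $1$ if $k=0$). A loop is a path with $c(q,\mathbf m)=0$; $L(q)$ is the set of loops for $q$. The weight $w_q$ is unique if $w_q(\mathbf m)=w_q(\mathbf n)$ for all paths $\mathbf m,\mathbf n$ for $q$ with $c(q,\mathbf m)=c(q,\mathbf n)$. *)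

From Stdlib Require Import Reals ZArith List.
Import ListNotations.
Open Scope R_scope.

(* A sequence m = (m_0,...,m_k) is represented by the list [m_0; ...; m_k]. *)

(* cs_aux q prev [m_j; ...] = [c(q,m_j); ...] given prev = c(q,m_{j-1}). *)
Fixpoint cs_aux (q prev : R) (l : list Z) : list R :=
  match l with
  | nil => nil
  | m :: t => let c := IZR m + / (q * prev) in c :: cs_aux q c t
  end.

Definition cs (q : R) (l : list Z) : list R :=
  match l with
  | nil => nil
  | m0 :: t => IZR m0 :: cs_aux q (IZR m0) t
  end.

Definition plen (l : list Z) : nat := Nat.pred (length l).

Definition cval (q : R) (l : list Z) : R := last (cs q l) 0.

Definition is_path (q : R) (l : list Z) : Prop :=
  l <> nil /\ Forall (fun c => c <> 0) (removelast (cs q l)).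

Definition weight (q : R) (l : list Z) : R :=
  Rpower q (INR (plen l) / 2) *
  fold_right Rmult 1 (map Rabs (removelast (cs q l))).

Definition is_loop (q : R) (l : list Z) : Prop :=
  is_path q l /\ cval q l = 0.

Definition weight_unique (q : R) : Prop :=
  forall m n : list Z, is_path q m -> is_path q n ->
    cval q m = cval q n -> weight q m = weight q n.

(* Multiplying every other entry of a loop m for q by an integer n gives a loop for q/n:
   the c-values of the new sequence are those of m, with every other one multiplied by n.
   Doing this once on the even and once on the odd positions yields two loops for q/n
   with the same c-value 0.  When the length k is odd, ⌈k/2⌉ of the first k c-values are
   scaled in the first loop and only ⌊k/2⌋ in the second, so their weights differ by the
   factor n ≠ 1. *)

From Stdlib Require Import Reals ZArith List Lra.
Open Scope R_scope.

Fixpoint alt_map {A : Type} (f : A -> A) (b : bool) (l : list A) : list A :=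
  match l with
  | nil => nil
  | x :: t => (if b then f x else x) :: alt_map f (negb b) t
  end.

Section AltMap.

Context {A : Type} (f : A -> A).

Lemma length_alt_map b l : length (alt_map f b l) = length l.
Proof. revert b; induction l; intros b; simpl; auto. Qed.

Lemma removelast_alt_map b l : removelast (alt_map f b l) = alt_map f b (removelast l).
Proof.
  revert b; induction l as [|x [|y t] IH]; intros b; try reflexivity.
  change (removelast (alt_map f b (x :: y :: t)))
    with ((if b then f x else x) :: removelast (alt_map f (negb b) (y :: t))).
  rewrite IH; reflexivity.
Qed.

Lemma last_alt_map_fixpoint b l d :
  f d = d -> last l d = d -> last (alt_map f b l) d = d.
Proof.
  intros Hd; revert b; induction l as [|x [|y t] IH]; intros b Hl; try reflexivity.
  - simpl in Hl |- *; subst; destruct b; auto.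
  - exact (IH (negb b) Hl).
Qed.

Lemma Forall_alt_map (P : A -> Prop) b l :
  (forall x, P x -> P (f x)) -> Forall P l -> Forall P (alt_map f b l).
Proof.
  intros Hf Hl; revert b; induction Hl; intros b; simpl; constructor; auto.
  destruct b; auto.
Qed.

End AltMap.

Lemma length_removelast {A : Type} (l : list A) :
  length (removelast l) = Nat.pred (length l).
Proof.
  induction l as [|x [|y t] IH]; try reflexivity.
  change (S (length (removelast (y :: t))) = length (y :: t)).
  rewrite IH; reflexivity.
Qed.

Lemma length_cs q l : length (cs q l) = length l.
Proof.
  assert (Haux : forall p t, length (cs_aux q p t) = length t)
    by (intros p t; revert p; induction t; intros p; simpl; auto).
  destruct l; simpl; auto.
Qed.

Section AlternateScaling.

Variables (q : R) (N : Z).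
Hypothesis HN : IZR N <> 0.

(* [prev] is the unscaled c-value of the previous entry; it was scaled iff [b] is false. *)
Lemma cs_aux_alt_map (b : bool) (prev : R) (l : list Z) :
  cs_aux (q / IZR N) (if b then prev else IZR N * prev) (alt_map (Z.mul N) b l)
  = alt_map (Rmult (IZR N)) b (cs_aux q prev l).
Proof.
  revert b prev; induction l as [|x t IH]; intros b prev; [reflexivity|].
  destruct b; simpl.
  - replace (IZR (N * x) + / (q / IZR N * prev)) with (IZR N * (IZR x + / (q * prev))).
    + exact (f_equal _ (IH false _)).
    + rewrite mult_IZR; unfold Rdiv; rewrite !Rinv_mult, Rinv_inv; ring.
  - replace (q / IZR N * (IZR N * prev)) with (q * prev) by (field; exact HN).
    exact (f_equal _ (IH true _)).
Qed.

Lemma cs_alt_map b l :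
  cs (q / IZR N) (alt_map (Z.mul N) b l) = alt_map (Rmult (IZR N)) b (cs q l).
Proof.
  destruct l as [|x t]; [reflexivity|].
  destruct b; simpl.
  - rewrite mult_IZR; exact (f_equal _ (cs_aux_alt_map false (IZR x) t)).
  - exact (f_equal _ (cs_aux_alt_map true (IZR x) t)).
Qed.

Lemma is_loop_alt_map b m : is_loop q m -> is_loop (q / IZR N) (alt_map (Z.mul N) b m).
Proof.
  intros [[Hne Hnz] Hc]; unfold cval in Hc.
  repeat split; unfold cval; rewrite ?cs_alt_map.
  - destruct m; [contradiction | discriminate].
  - rewrite removelast_alt_map; apply Forall_alt_map; [|exact Hnz].
    intros x Hx; apply Rmult_integral_contrapositive; auto.
  - apply last_alt_map_fixpoint; auto; ring.
Qed.

End AlternateScaling.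

Definition prod_abs (l : list R) : R := fold_right Rmult 1 (map Rabs l).

Lemma prod_abs_nonzero l : Forall (fun c => c <> 0) l -> prod_abs l <> 0.
Proof.
  induction 1; unfold prod_abs in *; simpl; [lra|].
  apply Rmult_integral_contrapositive; split; auto; apply Rabs_no_R0; auto.
Qed.

Lemma prod_abs_alt_map r l :
  prod_abs (alt_map (Rmult r) true l)
  = (if Nat.odd (length l) then Rabs r else 1) * prod_abs (alt_map (Rmult r) false l).
Proof.
  unfold prod_abs; induction l as [|x t IH]; simpl; [ring|].
  rewrite IH, Rabs_mult, Nat.odd_succ, <- Nat.negb_odd.
  destruct (Nat.odd (length t)); simpl; ring.
Qed.

Lemma weight_nonzero q l : is_path q l -> weight q l <> 0.
Proof.
  intros [_ Hnz]; apply Rmult_integral_contrapositive; split.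
  - apply Rgt_not_eq, exp_pos.
  - exact (prod_abs_nonzero _ Hnz).
Qed.

Lemma weight_alt_map q N m : IZR N <> 0 -> Nat.odd (plen m) = true ->
  weight (q / IZR N) (alt_map (Z.mul N) true m)
  = Rabs (IZR N) * weight (q / IZR N) (alt_map (Z.mul N) false m).
Proof.
  intros HN Hodd; unfold weight, plen; rewrite !length_alt_map, !cs_alt_map by exact HN.
  rewrite !removelast_alt_map.
  change (fold_right Rmult 1 (map Rabs ?l)) with (prod_abs l).
  rewrite prod_abs_alt_map, length_removelast, length_cs.
  fold (plen m); rewrite Hodd; ring.
Qed.

Theorem corollary3 (q : R) (hq : 0 < q) :
  (exists m : list Z, is_loop q m /\ Nat.odd (plen m) = true) ->
  forall n : nat, (2 <= n)%nat -> ~ weight_unique (q / INR n).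
Proof.
  intros [m [Hloop Hodd]] n Hn Hunique.
  rewrite INR_IZR_INZ in Hunique; set (N := Z.of_nat n) in Hunique.
  assert (HN2 : 2 <= IZR N)
    by (unfold N; rewrite <- INR_IZR_INZ; exact (le_INR 2 n Hn)).
  assert (HN : IZR N <> 0) by lra.
  destruct (is_loop_alt_map q N HN true m Hloop) as [Hpath1 Hc1].
  destruct (is_loop_alt_map q N HN false m Hloop) as [Hpath2 Hc2].
  assert (Hw := Hunique _ _ Hpath1 Hpath2 (eq_trans Hc1 (eq_sym Hc2))).
  rewrite weight_alt_map, Rabs_right in Hw by (auto; lra).
  apply (weight_nonzero _ _ Hpath2).
  set (w := weight (q / IZR N) (alt_map (Z.mul N) false m)) in Hw |- *.
  nra.
Qed.
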